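(* Let $\Delta\ge 4$ and $n\ge 3$ be integers. There exists a simple hamiltonian graph $G$ on $n$ vertices with maximum degree at most $\Delta$, diameter at most $2\,h(n,\Delta)$, and $$|E(G)|\le \Bigl(2-\frac{1}{\Delta-1}-\frac{(\Delta-2)^2}{(\Delta-1)^3}\Bigr)n+\frac{\Delta-3}{2}+2(\Delta-2).$$
   Context: Put $b=\Delta-1$. The complete $\Delta$-ary tree $T_{n,\Delta}$ is the rooted tree on vertex set $\{1,\dots,n\}$ with root $1$ in which the children of a vertex $i$ are the integers $j$ with $b(i-1)+2\le j\le bi+1$ and $j\le n$. Thus every vertex has at most $\Delta-1$ children, all levels except possibly the last are full, and the last level is filled from the left. The height $h(n,\Delta)$ of $T_{n,\Delta}$ is the largest distance from the root to a vertex. A graph is hamiltonian if it contains a cycle passing through every vertex exactly once; the diameter is the maximum graph distance between two vertices. *)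

From HB Require Import structures.
From mathcomp Require Import all_boot all_order all_algebra.
Set Implicit Arguments. Unset Strict Implicit. Unset Printing Implicit Defensive.
Import Order.TTheory GRing.Theory Num.Theory.

(* b = Delta - 1.  For a vertex j >= 2, its parent is the unique i with
   b(i-1)+2 <= j <= b i + 1, i.e. i = (j-2) %/ b + 1. *)
Definition tree_parent (D j : nat) : nat := (j - 2) %/ (D - 1) + 1.

(* distance from the root 1 to vertex j, computed by following parents
   (fuel j suffices since the parent of j >= 2 is < j when b >= 1) *)
Fixpoint tree_depth_aux (D fuel j : nat) : nat :=
  match fuel with
  | 0 => 0
  | f.+1 => if j <= 1 then 0 else (tree_depth_aux D f (tree_parent D j)).+1
  end.
Definition tree_depth (D j : nat) : nat := tree_depth_aux D j j.

Definition tree_height (n D : nat) : nat := \max_(1 <= j < n.+1) tree_depth D j.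

Definition simple_graph (n : nat) (e : rel 'I_n) : Prop :=
  (forall x, ~~ e x x) /\ (forall x y, e x y = e y x).

Definition deg (n : nat) (e : rel 'I_n) (x : 'I_n) : nat := #|[set y | e x y]|.

Definition num_edges (n : nat) (e : rel 'I_n) : nat :=
  #|[set p : 'I_n * 'I_n | (p.1 < p.2)%N && e p.1 p.2]|.

Definition hamiltonian (n : nat) (e : rel 'I_n) : Prop :=
  exists s : seq 'I_n, [/\ uniq s, size s = n & cycle e s].

Definition diam_le (n : nat) (e : rel 'I_n) (d : nat) : Prop :=
  forall x y : 'I_n, exists p : seq 'I_n,
    [/\ path e x p, last x p = y & (size p <= d)%N].

Local Open Scope ring_scope.
Definition edge_bound (D n : nat) : rat :=
  (2 - 1 / (D%:R - 1) - (D%:R - 2) ^+ 2 / (D%:R - 1) ^+ 3) * n%:R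
  + (D%:R - 3) / 2 + 2 * (D%:R - 2).

From HB Require Import structures.
From mathcomp Require Import all_boot all_order all_algebra zify ring lra.
Import Order.TTheory GRing.Theory Num.Theory.
Set Implicit Arguments. Unset Strict Implicit. Unset Printing Implicit Defensive.

(* A sparse hamiltonian graph of small diameter (with b = Delta - 1 >= 3).

   View {1, ..., n} as the complete b-ary tree (children of v: the b
   integers from v.-1 * b + 2 on).  Call v "thin" if it has at most one
   child, and call j >= 2 "attached" if it is the first child of its parent,
   or the second child of a parent that is not attached.  A recursive
   traversal [tour] lists every vertex once so that cyclically consecutive
   vertices are tree neighbours or both thin, and every attached vertex is
   next to its parent.  The graph is the union of the tree and of this
   hamiltonian cycle; then
   - its diameter is at most 2 h(n, Delta), since it contains the tree;
   - a thin vertex has degree <= 1 + 1 + 2 <= Delta, and the cycle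
     neighbours of any other vertex are tree neighbours, so degree <= b + 1;
   - it has at most (n - 1) + n - #attached edges, and the recurrence
     #att(m) + #att(g m) = f m + g m (f m, g m: numbers of first, second
     children in {2..m}), unfolded three times, bounds #attached from below. *)

Section CompleteTree.

Variable b : nat.
Hypothesis b_gt0 : 0 < b.

(* The complete b-ary tree on the integers >= 1, rooted at 1: the children
   of v are the b consecutive integers starting at v.-1 * b + 2, so a vertex
   j >= 2 is child number [slot j] (counting from 0) of [parent j]. *)
Definition parent (j : nat) : nat := (j - 2) %/ b + 1.
Definition slot (j : nat) : nat := (j - 2) %% b.
Definition children (n v : nat) : seq nat :=
  [seq j <- iota (v.-1 * b + 2) b | j <= n].

Lemma parent_gt0 j : 0 < parent j.
Proof. by rewrite /parent addn1. Qed.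

Lemma parent_lt j : 2 <= j -> parent j < j.
Proof. by move=> j2; rewrite /parent; have := leq_div (j - 2) b; lia. Qed.

Lemma parent_le j : 0 < j -> parent j <= j.
Proof.
move=> j1; case: (ltnP j 2) => j2; last exact/ltnW/parent_lt.
have -> : j = 1 by lia.
by rewrite /parent div0n.
Qed.

Lemma parent_child v i : 0 < v -> i < b -> parent (v.-1 * b + 2 + i) = v.
Proof. by move=> v1 ib; rewrite /parent addnAC addnK divnMDl // divn_small //; lia. Qed.

Lemma slot_child v i : i < b -> slot (v.-1 * b + 2 + i) = i.
Proof. by move=> ib; rewrite /slot addnAC addnK modnMDl modn_small. Qed.

Lemma child_block j : 2 <= j ->
  (parent j).-1 * b + 2 <= j < (parent j).-1 * b + 2 + b.
Proof.
move=> j2; rewrite /parent addn1 /=.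
have := divn_eq (j - 2) b; have := ltn_pmod (j - 2) b_gt0.
move: ((j - 2) %/ b) ((j - 2) %% b) => q r; nia.
Qed.

Lemma mem_children n v c :
  (c \in children n v) = (v.-1 * b + 2 <= c < v.-1 * b + 2 + b) && (c <= n).
Proof. by rewrite mem_filter mem_iota andbC. Qed.

Lemma children_uniq n v : uniq (children n v).
Proof. by rewrite filter_uniq // iota_uniq. Qed.

Lemma childrenP n v c : 0 < v -> c \in children n v ->
  [/\ parent c = v, 2 <= c, c <= n & v < c].
Proof.
move=> v1; rewrite mem_children => /andP[/andP[c_lo c_hi] cn].
have -> : c = v.-1 * b + 2 + (c - (v.-1 * b + 2)) by lia.
rewrite parent_child //; last by lia.
have : v.-1 <= v.-1 * b by rewrite leq_pmulr.
by split => //; lia.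
Qed.

Lemma parent_children n j : 2 <= j <= n -> j \in children n (parent j).
Proof. by move=> /andP[j2 jn]; rewrite mem_children jn andbT child_block. Qed.

Definition ancestor (v x : nat) : Prop := exists k, iter k parent x = v.

Lemma ancestor_parent c x : ancestor c x -> ancestor (parent c) x.
Proof. by move=> [k <-]; exists k.+1; rewrite iterS. Qed.

Lemma iter_parent_le k x : 0 < x -> iter k parent x <= x.
Proof.
move=> x1; elim: k => //= k IH; apply: leq_trans IH; apply: parent_le.
by case: k => [|k] //=; apply: parent_gt0.
Qed.

Lemma sibling_ancestor c c' x : 2 <= c -> 2 <= c' -> parent c = parent c' ->
  ancestor c x -> ancestor c' x -> c = c'.
Proof.
move=> c2 c'2 pc [i hi] [k hk].
wlog ik : c c' i k c2 c'2 pc hi hk / i <= k.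
  move=> W; case: (leqP i k) => h; first exact: (W c c' i k).
  by apply/esym; apply: (W c' c k i) => //; apply: ltnW.
move: hk; rewrite -(subnK ik) iterD hi; case: (k - i) => [//|d].
rewrite iterSr => hd; have := @iter_parent_le d (parent c) (parent_gt0 c).
by rewrite hd pc; have := parent_lt c'2; lia.
Qed.

(* The tour defined below uses the tree edge between j and its parent exactly
   when j is "attached": j is a first child, or a second child of a
   non-attached vertex.  The fuel f >= j suffices since parents are smaller. *)
Fixpoint attached_fuel (f j : nat) : bool :=
  match f with
  | 0 => false
  | f'.+1 => if j <= 1 then false
             else (slot j == 0) || ((slot j == 1) && ~~ attached_fuel f' (parent j))
  end.
Definition attached (j : nat) : bool := attached_fuel j j.

Lemma attached_fuel_enough f g j : j <= f -> j <= g ->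
  attached_fuel f j = attached_fuel g j.
Proof.
elim: f g j => [|f IH] [|g] j //=; try by case: j.
move=> jf jg; case: ifP => // j1; rewrite (IH g) //; have := parent_lt (_ : 2 <= j); lia.
Qed.

Lemma attached_root j : j <= 1 -> attached j = false.
Proof. by case: j => [|[|]]. Qed.

Lemma attachedE j : 2 <= j ->
  attached j = (slot j == 0) || ((slot j == 1) && ~~ attached (parent j)).
Proof.
move=> j2; rewrite /attached; case: j j2 => // j j2 /=.
rewrite ifN; last by rewrite -ltnNge.
by rewrite (@attached_fuel_enough j (parent j.+1)) //; have := parent_lt j2; lia.
Qed.

Lemma attached_child v i : 0 < v -> i < b ->
  attached (v.-1 * b + 2 + i) = (i == 0) || ((i == 1) && ~~ attached v).
Proof. by move=> v1 ib; rewrite attachedE ?slot_child ?parent_child // addnAC leq_addl. Qed.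

(* [thin n v]: v has at most one child in {1, ..., n}. *)
Definition thin (n v : nat) : bool := n < v.-1 * b + 3.

End CompleteTree.

Section ChildrenShape.

Variable b : nat.
Hypothesis b_ge2 : 1 < b.
Let b_gt0 : 0 < b := ltnW b_ge2.

Lemma children_cases n v : 0 < v ->
  match children b n v with
  | [::] => is_true (thin b n v)
  | [:: c] => thin b n v /\ attached b c
  | c :: c2 :: r => [/\ ~~ thin b n v, attached b c, attached b c2 = ~~ attached b v
                      & {in r, forall x, ~~ attached b x}]
  end.
Proof.
move=> v1; rewrite /children /thin.
have -> : v.-1 * b + 3 = (v.-1 * b + 2).+1 by rewrite addnS.
have := @attached_child b b_gt0 v _ v1; move: (v.-1 * b + 2) => L attL.
have split_iota : iota L b = L :: L.+1 :: iota L.+2 (b - 2).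
  by have {1}-> : b = (b - 2).+2 by lia.
have beyond : n < L.+2 -> [seq j <- iota L.+2 (b - 2) | j <= n] = [::].
  move=> nL; rewrite (@eq_in_filter _ _ pred0) ?filter_pred0 // => j.
  by rewrite mem_iota /=; lia.
have c0 := attL 0 b_gt0; have c1 := attL 1 b_ge2.
rewrite addn0 in c0; rewrite addn1 in c1.
rewrite split_iota /=; case: ifP => hL; last first.
  by rewrite ifF ?beyond //; lia.
case: ifP => hL1; last by rewrite beyond ?c0 //; lia.
rewrite c0 c1; split => //; first by lia.
move=> x; rewrite mem_filter mem_iota => /andP[_ /andP[x_lo x_hi]].
have -> : x = L + (x - L) by lia.
by rewrite attL //; lia.
Qed.

End ChildrenShape.

Lemma rev_path_sym (T : Type) (e : rel T) x p : symmetric e -> path e x p ->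
  [/\ rev (x :: p) = last x p :: rev (belast x p),
      path e (last x p) (rev (belast x p)),
      last (last x p) (rev (belast x p)) = x
    & size (rev (belast x p)) = size p].
Proof.
move=> e_sym xp; have rev_xp : rev (x :: p) = last x p :: rev (belast x p).
  by rewrite lastI rev_rcons.
split => //; last by rewrite size_rev size_belast.
  rewrite rev_path; move: xp; congr (is_true _); apply: eq_path => u v /=; exact: e_sym.
by rewrite -[LHS]/(last x (last x p :: rev (belast x p))) -rev_xp rev_cons last_rcons.
Qed.

Lemma uniq_flatten_disjoint (I T : eqType) (F : I -> seq T) (r : seq I) :
  uniq r -> {in r, forall c, uniq (F c)} ->
  {in r &, forall c c' x, x \in F c -> x \in F c' -> c = c'} ->
  uniq (flatten (map F r)).
Proof.
elim: r => //= c r IH /andP[cr ur] uF dF.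
rewrite cat_uniq uF ?mem_head //= IH //; first last.
- by move=> c1 c2 h1 h2; apply: dF; rewrite inE ?h1 ?h2 orbT.
- by move=> c1 h1; apply: uF; rewrite inE h1 orbT.
rewrite andbT; apply/hasPn => x /flatten_mapP[c' c'r xc']; apply/negP => xc.
have c'in : c' \in c :: r by rewrite inE c'r orbT.
by move: cr; rewrite (dF c c' (mem_head _ _) c'in x xc xc') c'r.
Qed.

Lemma infix_flatten (I T : eqType) (F : I -> seq T) (r : seq I) c :
  c \in r -> infix (F c) (flatten (map F r)).
Proof. by case/splitPr => r1 r2; rewrite map_cat flatten_cat /= infix_infix. Qed.

Definition linked (T : eqType) (s : seq T) (x y : T) : bool :=
  infix [:: x; y] s || infix [:: y; x] s.

Lemma linked_infix (T : eqType) (s s' : seq T) x y :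
  linked s x y -> infix s s' -> linked s' x y.
Proof. by move=> /orP[] h ss'; apply/orP; [left | right]; apply: infix_trans h ss'. Qed.

Lemma linkedC (T : eqType) (s : seq T) x y : linked s x y = linked s y x.
Proof. by rewrite /linked orbC. Qed.

Lemma linked_cat (T : eqType) (s1 s2 : seq T) x y : linked (s1 ++ x :: y :: s2) x y.
Proof. by rewrite /linked -cat1s -(cat1s y) catA infix_infix. Qed.

Lemma linked_rev (T : eqType) (s : seq T) x y : linked (rev s) x y = linked s x y.
Proof. by rewrite /linked -!infix_revLR /rev /= orbC. Qed.

Section Tour.

Variables b n : nat.
Hypothesis b_ge2 : 1 < b.
Let b_gt0 : 0 < b := ltnW b_ge2.

Definition tree_edge (x y : nat) : bool := (2 <= y) && (x == parent b y).

Definition tour_link (x y : nat) : bool :=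
  [|| tree_edge x y, tree_edge y x | thin b n x && thin b n y].

Lemma tour_link_sym : symmetric tour_link.
Proof. by move=> x y; rewrite /tour_link orbCA andbC orbA. Qed.

Lemma tour_link_child v c : 0 < v -> c \in children b n v -> tour_link v c.
Proof. by move=> v1 /(childrenP b_gt0 v1) [pc c2 _ _]; rewrite /tour_link /tree_edge c2 pc eqxx. Qed.

Fixpoint tour (f v : nat) : seq nat :=
  match f with
  | 0 => [:: v]
  | f'.+1 =>
    if attached b v then v :: flatten (map (tour f') (children b n v))
    else match children b n v with
         | [::] => [:: v]
         | c :: r => rev (tour f' c) ++ v :: flatten (map (tour f') r)
         end
  end.

Lemma tour_perm f v :
  perm_eq (tour f.+1 v) (v :: flatten (map (tour f) (children b n v))).
Proof.
rewrite /=; case: ifP => _ //; case: (children b n v) => [|c r] //=.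
by rewrite -cat1s perm_catCA /= perm_cons perm_cat2r perm_rev.
Qed.

Lemma mem_tour_step f v x : x \in tour f.+1 v ->
  x = v \/ exists2 c, c \in children b n v & x \in tour f c.
Proof.
rewrite (perm_mem (tour_perm f v)) inE => /orP[/eqP -> | /flatten_mapP[c hc hx]].
  by left.
by right; exists c.
Qed.

Lemma tour_self f v : v \in tour f v.
Proof. by case: f => [|f]; rewrite ?inE // (perm_mem (tour_perm f v)) mem_head. Qed.

Lemma tour_child_sub f v c : c \in children b n v -> {subset tour f c <= tour f.+1 v}.
Proof.
move=> hc x hx; rewrite (perm_mem (tour_perm f v)) inE.
by apply/orP; right; apply/flatten_mapP; exists c.
Qed.

Lemma tour_descendant f v x : 0 < v <= n -> x \in tour f v ->
  [/\ v <= x, x <= n & ancestor b v x].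
Proof.
elim: f v => [|f IH] v /andP[v1 vn]; first by rewrite inE => /eqP ->; split => //; exists 0.
case/mem_tour_step => [-> | [c hc hx]]; first by split => //; exists 0.
have [pc c2 cn vc] := childrenP b_gt0 v1 hc.
have [cx xn anc] : [/\ c <= x, x <= n & ancestor b c x] by apply: IH => //; lia.
by split => //; [lia | rewrite -pc; apply: ancestor_parent].
Qed.

Lemma tour_children_disjoint f v c c' x : 0 < v ->
  c \in children b n v -> c' \in children b n v ->
  x \in tour f c -> x \in tour f c' -> c = c'.
Proof.
move=> v1 hc hc' hx hx'.
have [pc c2 cn _] := childrenP b_gt0 v1 hc; have [pc' c'2 c'n _] := childrenP b_gt0 v1 hc'.
have [_ _ ac] : [/\ c <= x, x <= n & ancestor b c x] by apply: tour_descendant hx; lia.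
have [_ _ ac'] : [/\ c' <= x, x <= n & ancestor b c' x] by apply: tour_descendant hx'; lia.
exact: (sibling_ancestor b_gt0 c2 c'2 (etrans pc (esym pc')) ac ac').
Qed.

Lemma tour_uniq f v : 0 < v <= n -> uniq (tour f v).
Proof.
elim: f v => [|f IH] v /andP[v1 vn] //.
rewrite (perm_uniq (tour_perm f v)) /=; apply/andP; split.
  apply/negP => /flatten_mapP[c hc hv]; have [_ c2 cn vc] := childrenP b_gt0 v1 hc.
  have [cv _ _] : [/\ c <= v, v <= n & ancestor b c v] by apply: tour_descendant hv; lia.
  by lia.
apply: uniq_flatten_disjoint; first exact: children_uniq.
  by move=> c hc; have [_ c2 cn _] := childrenP b_gt0 v1 hc; apply: IH; lia.
by move=> c c' hc hc' x; apply: (tour_children_disjoint v1 hc hc').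
Qed.

Lemma tour_closed f v x c : 0 < v <= n -> n < v + f ->
  x \in tour f v -> c \in children b n x -> c \in tour f v.
Proof.
elim: f v x => [|f IH] v x /andP[v1 vn] hf; first by lia.
case/mem_tour_step => [-> hc | [c' hc' hx] hc]; first exact: (tour_child_sub hc) _ (tour_self f c).
have [_ c'2 c'n vc'] := childrenP b_gt0 v1 hc'.
by apply: (tour_child_sub hc'); apply: (IH c' x) => //; lia.
Qed.

Lemma tour_covers x : 0 < x <= n -> x \in tour n 1.
Proof.
elim/ltn_ind: x => x IH /andP[x1 xn].
case: (ltnP x 2) => x2.
  have -> : x = 1 by lia.
  exact: tour_self.
have px := parent_lt b_gt0 x2.
apply: (@tour_closed n 1 (parent b x)); try lia.
  by apply: IH => //; rewrite parent_gt0 /=; lia.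
by apply: parent_children; lia.
Qed.

Definition block (v : nat) (s : seq nat) : Prop :=
  exists h t, [/\ s = h :: t, path tour_link h t, thin b n (last h t)
                & if attached b v then h = v else thin b n h].

Lemma path_unattached_blocks x (F : nat -> seq nat) r :
  {in r, forall c, ~~ attached b c /\ block c (F c)} -> thin b n x ->
  path tour_link x (flatten (map F r)) /\ thin b n (last x (flatten (map F r))).
Proof.
elim: r x => [|c r IH] x hr tx //=.
have [/negbTE nc [h [t [-> p lt th]]]] := hr c (mem_head _ _); rewrite nc in th.
rewrite cat_path last_cat /= p /tour_link tx th !orbT /=.
by apply: IH => // c' hc'; apply: hr; rewrite inE hc' orbT.
Qed.

Section BlockStep.

Variables f v : nat.
Hypothesis v_gt0 : 0 < v.
Hypothesis child_blocks : {in children b n v, forall c, block c (tour f c)}.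

Lemma block_step_attached : attached b v -> block v (tour f.+1 v).
Proof.
move=> av; rewrite /= av; have := children_cases b_ge2 n v_gt0.
move: (fun c => @tour_link_child v c v_gt0) child_blocks.
case: (children b n v) => [|c [|c2 r]] link blk.
- by move=> tv; exists v, [::]; rewrite av.
- move=> [tv ac]; have [h [t [ect p lt hh]]] := blk c (mem_head _ _).
  rewrite ac in hh; subst h.
  exists v, (c :: t); rewrite /= cats0 ect av; split => //=.
  by rewrite p andbT link ?mem_head.
- move=> [ntv ac ac2 nr]; have [h [t [ect p lt hh]]] := blk c (mem_head _ _).
  rewrite ac in hh; subst h.
  have unatt : {in c2 :: r, forall x, ~~ attached b x /\ block x (tour f x)}.
    move=> x hx; split; last by apply: blk; rewrite inE hx orbT.
    by move: hx; rewrite inE => /predU1P[-> | /nr //]; rewrite ac2 av.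
  have [p2 l2] := path_unattached_blocks unatt lt.
  exists v, (c :: t ++ flatten (map (tour f) (c2 :: r))); rewrite /= ect av.
  split => //; last by rewrite last_cat.
  by rewrite /= cat_path p p2 link ?mem_head.
Qed.

Lemma block_step_unattached : ~~ attached b v -> block v (tour f.+1 v).
Proof.
move=> /negbTE av; rewrite /= av /=; have := children_cases b_ge2 n v_gt0.
move: (fun c => @tour_link_child v c v_gt0) child_blocks.
case: (children b n v) => [|c [|c2 r]] link blk.
- by move=> tv; exists v, [::]; rewrite av.
- move=> [tv ac]; have [h [t [ect p lt hh]]] := blk c (mem_head _ _).
  rewrite ac in hh; subst h.
  have [erev p_rev lrev _] := rev_path_sym tour_link_sym p.
  exists (last c t), (rev (belast c t) ++ [:: v]); rewrite ect erev av; split => //.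
    by rewrite cat_path p_rev /= andbT tour_link_sym lrev link ?mem_head.
  by rewrite last_cat.
- move=> [ntv ac ac2 nr]; rewrite av /= in ac2.
  have [h [t [ect p lt hh]]] := blk c (mem_head _ _); rewrite ac in hh; subst h.
  have c2in : c2 \in [:: c, c2 & r] by rewrite !inE eqxx orbT.
  have [h2 [t2 [ect2 p2 lt2 hh2]]] := blk c2 c2in; rewrite ac2 in hh2; subst h2.
  have unatt : {in r, forall x, ~~ attached b x /\ block x (tour f x)}.
    by move=> x hx; split; [exact: nr | apply: blk; rewrite !inE hx !orbT].
  have [p3 l3] := path_unattached_blocks unatt lt2.
  have [erev p_rev lrev _] := rev_path_sym tour_link_sym p.
  exists (last c t), (rev (belast c t) ++ v :: c2 :: t2 ++ flatten (map (tour f) r)).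
  rewrite ect /= ect2 erev av; split => //.
    rewrite cat_path p_rev /= lrev tour_link_sym link ?mem_head // link //=.
    by rewrite cat_path p2 p3.
  by rewrite last_cat /= last_cat.
Qed.

End BlockStep.

Lemma tour_block f v : 0 < v <= n -> n < v + f -> block v (tour f v).
Proof.
elim: f v => [|f IH] v /andP[v1 vn] hf; first by lia.
have blk : {in children b n v, forall c, block c (tour f c)}.
  by move=> c hc; have [_ c2 cn vc] := childrenP b_gt0 v1 hc; apply: IH; lia.
case: (boolP (attached b v)) => av.
  exact: block_step_attached.
exact: block_step_unattached.
Qed.

Lemma infix_tour_child f v c : c \in children b n v ->
  infix (tour f c) (tour f.+1 v) || infix (rev (tour f c)) (tour f.+1 v).
Proof.
move=> hc; rewrite /=; case: ifP => _.
  by apply/orP; left; rewrite -cat1s; apply: infix_catl; apply: infix_flatten.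
move: hc; case: (children b n v) => [|c1 r] //; rewrite inE => /predU1P[-> | hc].
  by rewrite prefix_infix orbT.
by apply/orP; left; rewrite -cat1s catA; apply: infix_catl; apply: infix_flatten.
Qed.

Lemma linked_attached_child f v c t : 0 < v -> c \in children b n v ->
  attached b c -> tour f c = c :: t -> linked (tour f.+1 v) v c.
Proof.
move=> v1 hc ac ect; have := children_cases b_ge2 n v1; rewrite /=.
case: ifP => av; move: hc; case: (children b n v) => [|c1 [|c2 r]] //.
- by rewrite inE => /eqP <- _; rewrite /= ect (linked_cat [::]).
- rewrite !inE => /or3P[/eqP <- | /eqP <- | cr] [_ _ ac2 nr].
  + by rewrite /= ect (linked_cat [::]).
  + by move: ac; rewrite ac2.
  + by move: ac; rewrite (negbTE (nr c cr)).
- rewrite inE => /eqP <- _; rewrite /= ect rev_cons -cats1 -catA linkedC.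
  exact: linked_cat.
- rewrite !inE => /or3P[/eqP <- | /eqP <- | cr] [_ _ ac2 nr].
  + by rewrite /= ect rev_cons -cats1 -catA linkedC linked_cat.
  + by rewrite /= ect linked_cat.
  + by move: ac; rewrite (negbTE (nr c cr)).
Qed.

Lemma tour_linked_parent f v j : 0 < v <= n -> n < v + f ->
  j \in tour f v -> j != v -> attached b j -> linked (tour f v) (parent b j) j.
Proof.
elim: f v => [|f IH] v /andP[v1 vn] hf; first by lia.
case/mem_tour_step => [-> /eqP // | [c hc hj]] jv aj.
have [pc c2 cn vc] := childrenP b_gt0 v1 hc.
case: (eqVneq j c) => [ejc | njc].
  have : block c (tour f c) by apply: tour_block; lia.
  case=> h [t [ect _ _]]; rewrite -ejc aj => ehj; subst h j.
  by rewrite pc; apply: linked_attached_child ect.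
have linked_c : linked (tour f c) (parent b j) j by apply: IH => //; lia.
case/orP: (infix_tour_child f hc) => inf; first exact: linked_infix linked_c inf.
by apply: linked_infix inf; rewrite linked_rev.
Qed.

End Tour.

Section AttachedCount.

Variable b : nat.

Definition attached_count (m : nat) : nat := \sum_(i < m.+1) attached b i.

Lemma attached_count_S m : attached_count m.+1 = attached_count m + attached b m.+1.
Proof. by rewrite /attached_count big_ord_recr. Qed.

Lemma attached_count_le m : attached_count m <= m.
Proof.
elim: m => [|m IH]; first by rewrite /attached_count big_ord_recr big_ord0.
by rewrite attached_count_S; case: (attached b _) => /=; lia.
Qed.

Hypothesis b_ge3 : 2 < b.
Let b_gt0 : 0 < b := ltnW (ltnW b_ge3).

(* Numbers of vertices j in {2, ..., m} with slot j = 0, resp. slot j = 1. *)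
Definition slot0_count (m : nat) : nat := (m + b - 2) %/ b.
Definition slot1_count (m : nat) : nat := (m + b - 3) %/ b.

Lemma slot0_count_S j : 1 < j -> slot0_count j = slot0_count j.-1 + (slot b j == 0).
Proof.
move=> j2; rewrite /slot0_count /slot.
have -> : j + b - 2 = (j.-1 + b - 2).+1 by lia.
rewrite divnS // addnC; congr (_ + _).
have -> : (j.-1 + b - 2).+1 = (j - 2) + b by lia.
by rewrite dvdn_addl.
Qed.

Lemma slot1_count_S j : 1 < j -> slot1_count j = slot1_count j.-1 + (slot b j == 1).
Proof.
move=> j2; rewrite /slot1_count /slot.
case: (ltnP j 3) => j3.
  have -> : j = 2 by lia.
  by rewrite subnn mod0n !divn_small //; lia.
have -> : j + b - 3 = (j.-1 + b - 3).+1 by lia.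
rewrite divnS // addnC; congr (_ + _).
have -> : (j.-1 + b - 3).+1 = (j - 3) + b by lia.
have -> : j - 2 = (j - 3).+1 by lia.
rewrite dvdn_addl // modnS; congr (nat_of_bool _).
case: ifP => [hdiv | _]; last by rewrite eqSS.
case: (boolP (b %| j - 3)) => // hk; move: hdiv; rewrite -addn1 (dvdn_addr _ hk) dvdn1; lia.
Qed.

(* The second children counted by slot1_count m are the children of the
   first slot1_count m vertices. *)
Lemma slot1_count_parent j : 1 < j -> slot b j = 1 -> slot1_count j = parent b j.
Proof.
move=> j2 s1; rewrite /slot1_count /parent; rewrite /slot in s1.
have := divn_eq (j - 2) b; rewrite s1 => ej.
have -> : j + b - 3 = ((j - 2) %/ b).+1 * b by rewrite mulSn; lia.
by rewrite mulnK // addn1.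
Qed.

(* Counting attached vertices by slot: a second child is attached exactly
   when its parent is not, and its parent ranges over {1, ..., slot1_count m}. *)
Lemma attached_count_rec m :
  attached_count m + attached_count (slot1_count m) = slot0_count m + slot1_count m.
Proof.
have small k : k < b -> k %/ b = 0 by move=> kb; rewrite divn_small.
elim: m => [|m IH].
  by rewrite /slot0_count /slot1_count !small /attached_count ?big_ord_recr ?big_ord0 //; lia.
case: (posnP m) => [-> | m1].
  by rewrite /slot0_count /slot1_count !small /attached_count ?big_ord_recr ?big_ord0 //; lia.
have j2 : 1 < m.+1 by lia.
rewrite attached_count_S (slot0_count_S j2) (slot1_count_S j2) /= (attachedE b_gt0 j2).
case: (eqVneq (slot b m.+1) 0) => [-> | s0] /=; first by rewrite !addn0; lia.
case: (eqVneq (slot b m.+1) 1) => [s1 | s2] /=; last by rewrite !addn0; lia.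
have ep : (slot1_count m).+1 = parent b m.+1.
  by rewrite -(slot1_count_parent j2 s1) (slot1_count_S j2) s1 addn1.
rewrite addn1 attached_count_S ep.
by case: (attached b (parent b m.+1)) => /=; lia.
Qed.

(* Unfolding the recurrence three times bounds attached_count n from below. *)
Lemma attached_count_lb n :
  slot0_count n + slot1_count n + slot0_count (slot1_count (slot1_count n)) <=
  attached_count n + slot0_count (slot1_count n) + slot1_count (slot1_count n).
Proof.
set y := slot1_count n; set z := slot1_count y.
have := attached_count_rec n; have := attached_count_rec y; have := attached_count_rec z.
have := attached_count_le (slot1_count z); rewrite -/y -/z; lia.
Qed.

End AttachedCount.

Lemma next_cat (T : eqType) (s1 s2 : seq T) x y :
  uniq (s1 ++ x :: y :: s2) -> next (s1 ++ x :: y :: s2) x = y.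
Proof.
move=> u; rewrite next_nth mem_cat inE eqxx orbT.
have xs1 : x \notin s1 by move: u; rewrite cat_uniq /= => /and3P[_ /norP[]].
case: s1 xs1 u => [|h s1] xs1 u /=; first by rewrite eqxx.
move: xs1; rewrite inE negb_or => /andP[hx xs1].
rewrite eq_sym (negbTE hx) index_cat (negbTE xs1) /= eqxx addn0.
by rewrite nth_cat ltnNge leqnSn /= subSn // subnn.
Qed.

Lemma linked_next (T : eqType) (s : seq T) x y : uniq s -> linked s x y ->
  (next s x == y) || (next s y == x).
Proof.
move=> us /orP[] /infixP[s1 [s2 e]]; rewrite e /= in us *.
  by rewrite next_cat ?eqxx.
by rewrite next_cat ?eqxx ?orbT.
Qed.

Lemma next_neq (T : eqType) (s : seq T) u : uniq s -> 1 < size s -> u \in s ->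
  next s u != u.
Proof.
move=> us s2 us'; rewrite next_nth us'.
case: s us s2 us' => [//|h p] us s2 us'.
set i := index u (h :: p).
have hi : i < size (h :: p) by rewrite index_mem.
have hu : nth h (h :: p) i = u by rewrite nth_index.
case: (ltnP i (size p)) => hl.
  change (nth h (h :: p) i.+1 != u); rewrite -[X in _ != X]hu nth_uniq //=; lia.
rewrite nth_default // -[X in _ != X]hu -[h]/(nth h (h :: p) 0) nth_uniq //=.
by move: s2 => /=; lia.
Qed.

Lemma card_le_seq n (A : {set 'I_n}) (s : seq nat) :
  (forall y : 'I_n, y \in A -> (y : nat) \in s) -> #|A| <= size s.
Proof.
move=> h; rewrite cardE -(size_map val); apply: uniq_leq_size.
  by rewrite map_inj_uniq ?enum_uniq //; apply: val_inj.
by move=> z /mapP[y]; rewrite mem_enum => yA ->; apply: h.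
Qed.

Section FullTour.

Variables b n : nat.
Hypotheses (b_ge2 : 1 < b) (n_gt0 : 0 < n).

Definition full_tour : seq nat := tour b n n 1.

Lemma mem_full_tour u : (u \in full_tour) = (0 < u <= n).
Proof.
apply/idP/idP => [hu | /(tour_covers b_ge2) //].
have [u1 un _] : [/\ 1 <= u, u <= n & ancestor b 1 u] by apply: tour_descendant hu; lia.
by rewrite un andbT.
Qed.

Lemma full_tour_uniq : uniq full_tour.
Proof. by apply: tour_uniq; rewrite ?n_gt0. Qed.

Lemma full_tour_perm : perm_eq full_tour (iota 1 n).
Proof.
apply: uniq_perm; [exact: full_tour_uniq | exact: iota_uniq |].
by move=> u; rewrite mem_full_tour mem_iota; lia.
Qed.

(* The tour closes up into a cycle: it starts and ends at thin vertices. *)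
Lemma full_tour_cycle : cycle (tour_link b n) full_tour.
Proof.
have : block b n 1 full_tour by apply: tour_block; lia.
case=> h [t [-> p lt th]]; have {}th : thin b n h := th.
by rewrite /= rcons_path p /= /tour_link lt th !orbT.
Qed.

Lemma full_tour_attached j : 2 <= j <= n -> attached b j ->
  (next full_tour (parent b j) == j) || (next full_tour j == parent b j).
Proof.
move=> hj aj; apply: linked_next full_tour_uniq _.
have hjt : j \in full_tour by rewrite mem_full_tour; lia.
by apply: (tour_linked_parent b_ge2) hjt _ aj; lia.
Qed.

End FullTour.

Section RootPath.

Variable b : nat.
Hypothesis b_gt0 : 0 < b.

Lemma tree_child_block u v : tree_edge b u v -> u.-1 * b + 2 <= v < u.-1 * b + 2 + b.
Proof. by move=> /andP[v2 /eqP ->]; apply: child_block. Qed.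

Lemma tree_parent_succ j : tree_parent b.+1 j = parent b j.
Proof. by rewrite /tree_parent /parent subn1. Qed.

Fixpoint root_path (f j : nat) : seq nat :=
  match f with
  | 0 => [::]
  | f'.+1 => if j <= 1 then [::] else parent b j :: root_path f' (parent b j)
  end.

Lemma size_root_path f j : size (root_path f j) = tree_depth_aux b.+1 f j.
Proof. by elim: f j => //= f IH j; case: ifP => //= _; rewrite IH tree_parent_succ. Qed.

Lemma last_root_path f j : 0 < j <= f.+1 -> last j (root_path f j) = 1.
Proof.
elim: f j => [|f IH] j hj /=; first by lia.
case: ifP => j1 /=; first by lia.
by apply: IH; have := parent_lt b_gt0 (_ : 2 <= j); rewrite parent_gt0 /=; lia.
Qed.

Lemma path_root_path f j : 0 < j ->
  path (fun u v => tree_edge b v u) j (root_path f j) /\ all (fun u => 0 < u <= j) (root_path f j).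
Proof.
elim: f j => [|f IH] j j1 //=; case: ifP => //= j_le1.
have j2 : 2 <= j by lia.
have [p a] := IH (parent b j) (parent_gt0 b j).
rewrite p /tree_edge j2 eqxx parent_gt0 /= (ltnW (parent_lt b_gt0 j2)); split => //.
by apply: sub_all a => u /andP[-> /=] h; have := parent_lt b_gt0 j2; lia.
Qed.

End RootPath.

Lemma depth_le_height D n j : 0 < j <= n -> tree_depth D j <= tree_height n D.
Proof.
move=> hj; rewrite /tree_height; apply: (leq_bigmax_seq j) => //.
by rewrite mem_index_iota; lia.
Qed.

Lemma perm_iota_uniq (s : seq nat) k : perm_eq s (iota 1 k) -> uniq s.
Proof. by move=> hs; rewrite (perm_uniq hs) iota_uniq. Qed.

Lemma perm_iota_mem (s : seq nat) k : perm_eq s (iota 1 k) ->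
  forall u, (u \in s) = (0 < u <= k).
Proof. by move=> hs u; rewrite (perm_mem hs) mem_iota; lia. Qed.

Section TourGraph.

Variables (b m : nat) (s : seq nat).

(* The union of the tree and of the cycle s on {1, ..., m.+1}, ... *)
Definition tree_cycle_rel (u v : nat) : bool :=
  [|| tree_edge b u v, tree_edge b v u, v == next s u | u == next s v].

(* ... transported to 'I_m.+1, where x stands for the vertex x.+1. *)
Definition tree_cycle_graph : rel 'I_m.+1 := fun x y => tree_cycle_rel x.+1 y.+1.

Lemma tree_cycle_graph_sym : symmetric tree_cycle_graph.
Proof.
move=> x y; rewrite /tree_cycle_graph /tree_cycle_rel.
by rewrite orbA (orbC (tree_edge b x.+1 y.+1)) -orbA (orbC (y.+1 == _)).
Qed.

(* The graph is simple (the tree and the cycle of length >= 2 have no loops). *)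
Lemma tree_cycle_graph_simple : 0 < b -> 0 < m -> perm_eq s (iota 1 m.+1) ->
  simple_graph tree_cycle_graph.
Proof.
move=> b_gt0 m_gt0 hs; split; last exact: tree_cycle_graph_sym.
have s_uniq := perm_iota_uniq hs.
have s2 : 1 < size s by rewrite (perm_size hs) size_iota; lia.
move=> x; have xs : x.+1 \in s by rewrite (perm_iota_mem hs) ltn_ord.
rewrite /tree_cycle_graph /tree_cycle_rel; apply/negP => /or4P[| | /eqP h | /eqP h].
- by move=> /andP[x2 /eqP e]; have := parent_lt b_gt0 x2; rewrite -e ltnn.
- by move=> /andP[x2 /eqP e]; have := parent_lt b_gt0 x2; rewrite -e ltnn.
- by move: (next_neq s_uniq s2 xs); rewrite -h eqxx.
- by move: (next_neq s_uniq s2 xs); rewrite -h eqxx.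
Qed.

Lemma tree_cycle_graph_hamiltonian : perm_eq s (iota 1 m.+1) ->
  hamiltonian tree_cycle_graph.
Proof.
move=> hs; have mem_s := perm_iota_mem hs.
pose f (u : nat) : 'I_m.+1 := inord u.-1.
have fK u : u \in s -> (f u).+1 = u by rewrite mem_s => /andP[u1 um]; rewrite /f inordK; lia.
exists (map f s); split.
- rewrite map_inj_in_uniq ?(perm_iota_uniq hs) // => u v hu hv e.
  by rewrite -(fK u hu) -(fK v hv) e.
- by rewrite size_map (perm_size hs) size_iota.
- rewrite cycle_map; apply: (sub_in_cycle (P := fun u => u \in s) (e := frel (next s))).
  + move=> u v hu hv /= /eqP h.
    by rewrite /tree_cycle_graph /tree_cycle_rel (fK u hu) (fK v hv) -h eqxx !orbT.
  + by apply/allP.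
  + exact: cycle_next (perm_iota_uniq hs).
Qed.

Lemma walk_to_root (x : 'I_m.+1) : 0 < b ->
  exists p, [/\ path tree_cycle_graph x p, last x p = ord0 & size p = tree_depth b.+1 x.+1].
Proof.
move=> b_gt0.
pose f (u : nat) : 'I_m.+1 := inord u.-1.
have fx : f x.+1 = x by rewrite /f /= inord_val.
have [pu au] := @path_root_path b b_gt0 x.+1 x.+1 (ltn0Sn _).
exists (map f (root_path b x.+1 x.+1)); split.
- rewrite -{1}fx path_map.
  apply: (sub_in_path (P := fun u => 0 < u <= m.+1)) pu.
  + move=> u v /= hu hv h; rewrite /tree_cycle_graph /f !inordK; try lia.
    by rewrite !prednK ?(andP hu).1 ?(andP hv).1 // /tree_cycle_rel h orbT.
  + rewrite /= ltn_ord /=; apply: sub_all au => u /andP[-> /=] h.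
    by have := ltn_ord x; lia.
- rewrite -{1}fx last_map last_root_path //=.
  by apply/val_inj; rewrite /= inordK.
- by rewrite size_map size_root_path.
Qed.

(* The graph contains the tree, so its diameter is at most twice the height. *)
Lemma tree_cycle_graph_diam : 0 < b ->
  diam_le tree_cycle_graph (2 * tree_height m.+1 b.+1).
Proof.
move=> b_gt0 x y.
have [p1 [h1 l1 s1]] := walk_to_root x b_gt0; have [p2 [h2 l2 s2]] := walk_to_root y b_gt0.
have [_ r1 r2 r3] := rev_path_sym tree_cycle_graph_sym h2.
exists (p1 ++ rev (belast y p2)); split.
- by rewrite cat_path h1 l1 -l2 r1.
- by rewrite last_cat l1 -l2 r2.
- rewrite size_cat r3 s1 s2.
  have := @depth_le_height b.+1 m.+1 x.+1; have := @depth_le_height b.+1 m.+1 y.+1.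
  by rewrite !ltn_ord /= => /(_ isT) hy /(_ isT) hx; lia.
Qed.

Lemma tree_cycle_neighbour x y : uniq s -> tree_cycle_graph x y ->
  [\/ tree_edge b x.+1 y.+1, tree_edge b y.+1 x.+1, y.+1 = next s x.+1
     | y.+1 = prev s x.+1].
Proof.
move=> s_uniq; rewrite /tree_cycle_graph /tree_cycle_rel => /or4P[h | h | /eqP h | /eqP h].
- exact: Or41.
- exact: Or42.
- exact: Or43.
- by apply: Or44; rewrite h (prev_next s_uniq).
Qed.

(* A thin vertex is adjacent to at most its parent, one child and its two
   cycle neighbours; the cycle neighbours of a vertex that is not thin are
   tree neighbours. *)
Lemma tree_cycle_graph_deg x : 2 < b -> perm_eq s (iota 1 m.+1) ->
  cycle (tour_link b m.+1) s -> deg tree_cycle_graph x <= b.+1.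
Proof.
move=> b_ge3 hs s_cycle; have b_gt0 : 0 < b by lia.
have s_uniq := perm_iota_uniq hs.
rewrite /deg; have u_s : x.+1 \in s by rewrite (perm_iota_mem hs) ltn_ord.
case: (boolP (thin b m.+1 x.+1)) => tu.
  pose nbrs := [:: (parent b x.+1).-1; x.+1.-1 * b + 1; (next s x.+1).-1; (prev s x.+1).-1].
  apply: (@leq_trans (size nbrs)); last by rewrite /=; lia.
  apply: card_le_seq => y; rewrite inE !inE.
  case/(tree_cycle_neighbour s_uniq) => [h | /andP[_ /eqP <-] | <- | <-] /=; rewrite ?eqxx ?orbT //.
  by have := tree_child_block b_gt0 h; have := ltn_ord y; move: tu; rewrite /thin; lia.
have tree_link v : tour_link b m.+1 x.+1 v -> tree_edge b x.+1 v || tree_edge b v x.+1.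
  by rewrite /tour_link (negbTE tu) /= orbF.
apply: (@leq_trans (size ((parent b x.+1).-1 :: iota (x.+1.-1 * b + 1) b))).
  apply: card_le_seq => y; rewrite inE => hy; rewrite inE mem_iota.
  have : tree_edge b x.+1 y.+1 || tree_edge b y.+1 x.+1.
    case/(tree_cycle_neighbour s_uniq): hy => [-> | -> | -> | ->]; rewrite ?orbT //.
      exact: tree_link (next_cycle s_cycle u_s).
    by apply: tree_link; rewrite tour_link_sym; apply: prev_cycle s_cycle u_s.
  case/orP => [h | /andP[_ /eqP <-]] /=; last by rewrite eqxx.
  by apply/orP; right; have := tree_child_block b_gt0 h; lia.
by rewrite /= size_iota.
Qed.

Definition tree_pairs : {set 'I_m.+1 * 'I_m.+1} :=
  [set p : 'I_m.+1 * 'I_m.+1 | (p.1 < p.2) && (tree_edge b p.1.+1 p.2.+1 || tree_edge b p.2.+1 p.1.+1)].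
Definition cycle_pairs : {set 'I_m.+1 * 'I_m.+1} :=
  [set p : 'I_m.+1 * 'I_m.+1 | (p.1 < p.2) && ((p.2.+1 == next s p.1.+1) || (p.1.+1 == next s p.2.+1))].

Lemma num_edges_le : num_edges tree_cycle_graph <= #|tree_pairs :|: cycle_pairs|.
Proof.
apply: subset_leq_card; apply/subsetP => p; rewrite !inE /tree_cycle_graph /tree_cycle_rel.
by case/andP => -> /or4P[] ->; rewrite ?orbT.
Qed.

(* A tree pair is determined by its larger vertex, the child. *)
Lemma card_tree_pairs : 0 < b -> #|tree_pairs| <= m.
Proof.
move=> b_gt0.
pose g (y : 'I_m.+1) := (inord (parent b y.+1).-1 : 'I_m.+1, y).
apply: (@leq_trans #|g @: [set~ ord0]|); last first.
  by apply: leq_trans (leq_imset_card _ _) _; rewrite cardsC1 card_ord.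
apply: subset_leq_card; apply/subsetP => -[p1 p2]; rewrite inE /=.
move=> /andP[lt12 /orP[]] /andP[_ /eqP h].
  apply/imsetP; exists p2; first by rewrite !inE; apply/eqP => e; move: lt12; rewrite e.
  rewrite /g -h /=; congr pair; apply/val_inj; rewrite /= inordK //; exact: ltnW (ltn_ord p1).
by have := parent_le b_gt0 (ltn0Sn p1); rewrite -h; lia.
Qed.

(* A cycle pair is determined by its vertex whose successor is the other. *)
Lemma card_cycle_pairs : #|cycle_pairs| <= m.+1.
Proof.
pose w (z : 'I_m.+1) := (inord (next s z.+1).-1 : 'I_m.+1).
pose g (z : 'I_m.+1) := if z < w z then (z, w z) else (w z, z).
apply: (@leq_trans #|g @: setT|).
  apply: subset_leq_card; apply/subsetP => -[p1 p2]; rewrite inE /= => /andP[lt12 /orP[] /eqP h].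
    apply/imsetP; exists p1 => //.
    have wp : w p1 = p2 by apply/val_inj; rewrite /w -h /= inordK //; exact: ltnW (ltn_ord p2).
    by rewrite /g wp lt12.
  apply/imsetP; exists p2 => //.
  have wp : w p2 = p1 by apply/val_inj; rewrite /w -h /= inordK //; exact: ltnW (ltn_ord p1).
  by rewrite /g wp ltnNge (ltnW lt12).
by apply: leq_trans (leq_imset_card _ _) _; rewrite cardsT card_ord.
Qed.

Lemma attached_count_card : attached_count b m.+1 = #|[set y : 'I_m.+1 | attached b y.+1]|.
Proof.
rewrite /attached_count big_ord_recl /= add0n -sum1_card [RHS]big_mkcond /=.
by apply: eq_bigr => i _; rewrite inE; case: (attached b _).
Qed.

(* The edge from an attached vertex to its parent is both a tree and a cycle
   edge. *)
Lemma attached_count_le_common : 0 < b ->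
  (forall j, 2 <= j <= m.+1 -> attached b j ->
     (next s (parent b j) == j) || (next s j == parent b j)) ->
  attached_count b m.+1 <= #|tree_pairs :&: cycle_pairs|.
Proof.
move=> b_gt0 s_attached.
pose h (y : 'I_m.+1) := (inord (parent b y.+1).-1 : 'I_m.+1, y).
have h_inj : injective h by move=> y1 y2 [].
rewrite attached_count_card -(card_imset _ h_inj).
apply: subset_leq_card; apply/subsetP => p /imsetP[y]; rewrite inE => ay ->.
have y2 : 2 <= y.+1 by case: (ltnP y.+1 2) => // hl; move: ay; rewrite attached_root //; lia.
have pl := parent_lt b_gt0 y2; have p1 := parent_gt0 b y.+1.
have e1 : (inord (parent b y.+1).-1 : 'I_m.+1).+1 = parent b y.+1.
  by rewrite inordK; have := ltn_ord y; lia.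
rewrite !inE /= e1 /tree_edge y2 eqxx /=.
have -> : parent b y.+1 <= y by lia.
have hy2 : 2 <= y.+1 <= m.+1 by rewrite y2 ltn_ord.
by move: (s_attached y.+1 hy2 ay); rewrite !(eq_sym y.+1) !(eq_sym (parent b y.+1)).
Qed.

Lemma tree_cycle_graph_edges : 0 < b ->
  (forall j, 2 <= j <= m.+1 -> attached b j ->
     (next s (parent b j) == j) || (next s j == parent b j)) ->
  num_edges tree_cycle_graph + attached_count b m.+1 + 1 <= 2 * m.+1.
Proof.
move=> b_gt0 s_attached; have := cardsUI tree_pairs cycle_pairs.
have := num_edges_le; have := card_tree_pairs b_gt0; have := card_cycle_pairs.
have := attached_count_le_common b_gt0 s_attached; lia.
Qed.

End TourGraph.

(* The arithmetic core of the lower bound on attached vertices, with b = c.+1: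
   X, y, Y, z, Z are slot counts at n, g n, g (g n) and a = #attached. *)
Lemma count_arith c n a X y Y z Z :
  X + y + Z <= a + Y + z ->
  n <= X * c.+1 + 1 -> n <= y * c.+1 + 2 ->
  Y * c.+1 + 2 <= y + c.+1 -> z * c.+1 + 3 <= y + c.+1 -> z <= Z * c.+1 + 1 ->
  (c.+1 ^ 2 + c ^ 2) * n <= c.+1 ^ 3 * a + 4 * c.+1 ^ 3.
Proof.
move=> h_rec hX hy hY hz hZ.
have m1 := leq_mul (leqnn (c.+1 ^ 3)) h_rec.
have m2 := leq_mul (leqnn (c.+1 ^ 2)) hX.
have m3 := leq_mul (leqnn (c.+1 ^ 2)) hY.
have m4 := leq_mul (leqnn (c ^ 2)) hy.
have m5 := leq_mul (leqnn (c.+1 * c)) hz.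
have m6 := leq_mul (leqnn (c.+1 ^ 2)) hZ.
have p3 : 0 <= c ^ 3 by [].
have p2 : 0 <= c ^ 2 by [].
lia.
Qed.

(* The lower bound on attached vertices: the unfolded recurrence together
   with the estimates k - b < k %/ b * b <= k for the slot counts. *)
Lemma attached_count_bound b n : 2 < b ->
  (b ^ 2 + b.-1 ^ 2) * n <= b ^ 3 * attached_count b n + 4 * b ^ 3.
Proof.
move=> b3; have b0 : 0 < b by lia.
have lo k : k < (k %/ b).+1 * b := ltn_ceil k b0.
have hi k : k %/ b * b <= k := leq_divM k b.
move: (attached_count_lb b3 n); rewrite /slot0_count /slot1_count.
case: b b3 b0 lo hi => [//|c] b3 b0 lo hi /= count_lb.
set y := (n + c.+1 - 3) %/ c.+1 in count_lb *; set z := (y + c.+1 - 3) %/ c.+1 in count_lb *.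
apply: count_arith count_lb _ _ _ _ _.
- by have := lo (n + c.+1 - 2); rewrite mulSn; lia.
- by have := lo (n + c.+1 - 3); rewrite mulSn -/y; lia.
- by have := hi (y + c.+1 - 2); move: (_ %/ _) => Y; lia.
- by have := hi (y + c.+1 - 3); rewrite -/z; lia.
- by have := lo (z + c.+1 - 2); rewrite mulSn; move: (_ %/ _) => Z; lia.
Qed.

Section EdgeBound.

Local Open Scope ring_scope.

(* The bound of the theorem, in terms of B = Delta - 1. *)
Lemma edge_bound_real (B N A n : rat) : 3 <= B -> N + A + 1 <= 2 * n ->
  (B ^+ 2 + (B - 1) ^+ 2) * n <= B ^+ 3 * A + 4 * B ^+ 3 ->
  N <= (2 - 1 / B - (B - 1) ^+ 2 / B ^+ 3) * n + (B - 2) / 2 + 2 * (B - 1).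
Proof.
move=> B3 hN hA; have B0 : 0 < B by lra.
suff : (1 / B + (B - 1) ^+ 2 / B ^+ 3) * n <= A + 4 by lra.
have -> : (1 / B + (B - 1) ^+ 2 / B ^+ 3) * n = (B ^+ 2 + (B - 1) ^+ 2) * n / B ^+ 3.
  by field; lra.
by rewrite ler_pdivrMr ?exprn_gt0 //; lra.
Qed.

Lemma edge_bound_of_counts b n N a : (2 < b)%N -> (N + a + 1 <= 2 * n)%N ->
  ((b ^ 2 + b.-1 ^ 2) * n <= b ^ 3 * a + 4 * b ^ 3)%N ->
  N%:R <= edge_bound b.+1 n :> rat.
Proof.
move=> b3; rewrite -!(ler_nat rat) !(natrD, natrM, natrX) -subn1 natrB; last by lia.
move=> hN hA; rewrite /edge_bound -(@natr1 rat b).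
have -> : b%:R + 1 - 1 = b%:R :> rat by lra.
have -> : b%:R + 1 - 2 = b%:R - 1 :> rat by lra.
have -> : b%:R + 1 - 3 = b%:R - 2 :> rat by lra.
by apply: edge_bound_real hN hA; rewrite (ler_nat rat 3).
Qed.

End EdgeBound.

Theorem mainTheorem7 (D n : nat) :
  (4 <= D)%N -> (3 <= n)%N ->
  exists e : rel 'I_n,
    [/\ simple_graph e, hamiltonian e,
        (forall x, (deg e x <= D)%N),
        diam_le e (2 * tree_height n D)
      & ((num_edges e)%:R <= edge_bound D n :> rat)%R].
Proof.
case: D => [|b] // D4; case: n => [|m] // n3.
have b_ge3 : (2 < b)%N by lia.
have b_gt0 : (0 < b)%N by lia.
have b_ge2 : (1 < b)%N by lia.
have s_perm := full_tour_perm b_ge2 (ltn0Sn m).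
exists (tree_cycle_graph b (full_tour b m.+1)); split.
- by apply: tree_cycle_graph_simple s_perm; lia.
- exact: tree_cycle_graph_hamiltonian s_perm.
- by move=> x; apply: tree_cycle_graph_deg b_ge3 s_perm (full_tour_cycle b_ge2 _).
- exact: tree_cycle_graph_diam b_gt0.
- apply: edge_bound_of_counts b_ge3 _ (attached_count_bound m.+1 b_ge3).
  exact: tree_cycle_graph_edges b_gt0 (full_tour_attached b_ge2 (ltn0Sn m)).
Qed.
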